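(* Let $b\ge 3$, $D\subset\{0,\dots,b-1\}$ with $2\le|D|<b-1$, and list $\mathcal C=\mathcal C_{b,D}$ increasingly as $k_0<k_1<\cdots$. Given $\epsilon>0$ and $H\in\mathbb N$, for all sufficiently large $n_0$ there exist a set $G\subset \mathcal C\cap[0,b^{n_0})$ and a map $(k',h)\mapsto k''(k',h)\in\mathcal C\cap[0,b^{n_0})$, defined for $k'\in G$ and $0<h\le H$, such that: (1) $|G|\ge(1-\epsilon)|D|^{n_0}$; (2) for every $k'\in G$, $0<h\le H$ and $m\ge 1$, if $n$ is the index with $k_n=b^{n_0}k_m+k'$, then $k_{n+h}=b^{n_0}k_m+k''(k',h)$ and $s_b(k_{n+h})=s_b(k_m)+s_b(k''(k',h))$.
   Context: For an integer base $b\ge 3$ and a digit set $D$, the classical integer Cantor set is $\mathcal C_{b,D}=\{\sum_{j=0}^{k} d_j b^j : k\in\mathbb N_0,\ d_j\in D\}$. For a nonnegative integer $k=\sum_c k_c b^c$ with $k_c\in\{0,\dots,b-1\}$, $s_b(k)=\sum_c k_c$ is the base-$b$ sum of digits. *)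

From HB Require Import structures.
From mathcomp Require Import all_boot all_order all_algebra.
From mathcomp Require Import reals.
Set Implicit Arguments. Unset Strict Implicit. Unset Printing Implicit Defensive.

Definition digval (b : nat) (s : seq nat) : nat :=
  foldr (fun d acc => d + b * acc) 0 s.

Definition inC (b : nat) (D : {set 'I_b}) (x : nat) : Prop :=
  exists s : seq 'I_b, [/\ 0 < size s, all (fun d => d \in D) s &
                          x = digval b (map val s)].

(* Base-b digit sum s_b(k) = sum_c k_c, where k_c = (k / b^c) mod b.
   For b >= 2 all digits at positions c > k vanish, so summing over
   c <= k is the full digit sum. *)
Definition sumdig (b k : nat) : nat :=
  \sum_(c < k.+1) ((k %/ b ^ c) %% b).

From HB Require Import structures.
From mathcomp Require Import all_boot all_order all_algebra.
From mathcomp Require Import reals.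
From mathcomp Require Import zify.
Import Order.TTheory GRing.Theory Num.Theory.
Set Implicit Arguments. Unset Strict Implicit. Unset Printing Implicit Defensive.

(* Let T be the increasing list of the values of the n0-digit words over D.
   For a in C with a > 0, the elements of C in [b^n0 a, b^n0 (a + 1)) are
   exactly the numbers b^n0 a + x with x in T: every digit expansion of such
   an element has more than n0 digits, and its lowest n0 digits form a word
   of T.  Hence, once b^n0 a + x is enumerated, the next h elements of C are
   b^n0 a + (the h-th successor of x in T), as long as that successor exists,
   and the digit sum splits since the two parts occupy disjoint digits.
   Discarding the last H elements of T leaves at least |D|^n0 - H of them,
   which is at least (1 - eps) |D|^n0 for large n0. *)

Lemma digval_cat b s1 s2 :
  digval b (s1 ++ s2) = digval b s1 + b ^ size s1 * digval b s2.
Proof.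
elim: s1 => [|d s1 IH] /=; first by rewrite expn0 mul1n.
by rewrite IH expnS mulnDr addnA mulnA.
Qed.

Lemma digval_ord_lt b (s : seq 'I_b) : digval b (map val s) < b ^ size s.
Proof.
elim: s => [|d s IH] /=; first by rewrite expn0.
rewrite expnS (leq_trans _ (leq_mul (leqnn b) IH)) // mulnS ltn_add2r.
exact: ltn_ord.
Qed.

Lemma digval_ord_inj b (s1 s2 : seq 'I_b) : size s1 = size s2 ->
  digval b (map val s1) = digval b (map val s2) -> s1 = s2.
Proof.
elim: s1 s2 => [|d1 s1 IH] [|d2 s2] //= [/IH eq_s] eq_v.
have lt1 := ltn_ord d1; have lt2 := ltn_ord d2.
have eq_d : val d1 = val d2.
  move: (congr1 (modn^~ b) eq_v).
  by rewrite ![_ + b * _]addnC ![b * _]mulnC !modnMDl !modn_small.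
congr (_ :: _); first exact: val_inj.
apply: eq_s; apply/eqP; rewrite -(eqn_pmul2l (leq_ltn_trans (leq0n _) lt1)).
by move: eq_v; rewrite eq_d => /addnI ->.
Qed.

Lemma sum_digits_widen b x L M : 1 < b -> x < b ^ L -> L <= M ->
  \sum_(c < M) x %/ b ^ c %% b = \sum_(c < L) x %/ b ^ c %% b.
Proof.
move=> b_gt1 x_lt le_LM; rewrite -(subnKC le_LM) big_split_ord /=.
rewrite [X in _ + X]big1 ?addn0 // => c _; rewrite divn_small ?mod0n //.
by apply: leq_trans x_lt _; rewrite leq_exp2l ?leq_addr.
Qed.

Lemma sumdigE b L x : 1 < b -> x < b ^ L ->
  sumdig b x = \sum_(c < L) x %/ b ^ c %% b.
Proof.
move=> b_gt1 x_lt; have x_lt' : x < b ^ x.+1.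
  by rewrite (ltn_trans (ltn_expl x b_gt1)) // ltn_exp2l.
rewrite /sumdig -(sum_digits_widen b_gt1 x_lt' (leq_maxr L x.+1)).
exact: sum_digits_widen (leq_maxl _ _).
Qed.

Lemma sumdig_divn b x : 1 < b -> sumdig b x = x %% b + sumdig b (x %/ b).
Proof.
move=> b_gt1; have x_lt : x < b ^ x.+1.
  by rewrite (ltn_trans (ltn_expl x b_gt1)) // ltn_exp2l.
rewrite (sumdigE (L := x.+2) b_gt1) ?(ltn_trans x_lt) ?ltn_exp2l //.
rewrite (sumdigE (L := x.+1) b_gt1) ?(leq_ltn_trans (leq_div x b)) //.
rewrite big_ord_recl expn0 divn1; congr (_ + _).
by apply: eq_bigr => c _; rewrite lift0 expnS divnMA.
Qed.

Lemma sumdig_block b n a x : 1 < b -> x < b ^ n ->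
  sumdig b (b ^ n * a + x) = sumdig b a + sumdig b x.
Proof.
move=> b_gt1; elim: n x => [|n IH] x x_lt.
  move: x_lt; rewrite expn0 ltnS leqn0 mul1n => /eqP ->.
  by rewrite (sumdigE (L := 0) (x := 0) b_gt1) ?expn0 // big_ord0 !addn0.
have x_lt' : x %/ b < b ^ n by rewrite ltn_divLR ?(ltnW b_gt1) // -expnSr.
have -> : b ^ n.+1 * a + x = (b ^ n * a + x %/ b) * b + x %% b.
  by rewrite {1}(divn_eq x b) expnSr; lia.
rewrite sumdig_divn // modnMDl modn_mod divnMDl ?(ltnW b_gt1) //.
rewrite (divn_small (ltn_pmod _ (ltnW b_gt1))) addn0 IH // (sumdig_divn x b_gt1).
lia.
Qed.

Lemma sorted_ltn_gap (s : seq nat) i x : sorted ltn s -> i.+1 < size s ->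
  x \in s -> ~~ (nth 0 s i < x < nth 0 s i.+1).
Proof.
move=> s_lt i_lt xs; apply/negP => /andP[].
have s_le : sorted leq s by apply: sub_sorted s_lt => ? ? /ltnW.
have nth_le := sorted_leq_nth leq_trans leqnn 0 s_le.
have j_lt : index x s < size s by rewrite index_mem.
rewrite -(nth_index 0 xs) => lo hi.
have i_lt_j : i < index x s.
  by rewrite ltnNge; apply/negP => /(nth_le _ _ j_lt (ltnW i_lt)); rewrite leqNgt lo.
by have := nth_le _ _ i_lt j_lt i_lt_j; rewrite leqNgt hi.
Qed.

Lemma enum_succ (P : nat -> Prop) (k : nat -> nat) n y :
  {homo k : i j / i < j} -> (forall x, P x <-> exists n, k n = x) ->
  P y -> k n < y -> (forall z, P z -> ~~ (k n < z < y)) -> k n.+1 = y.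
Proof.
move=> k_incr k_enum Py lt_y no_gap; have [p kp] := (k_enum y).1 Py.
have le_y : k n.+1 <= y.
  by rewrite -kp (leq_mono k_incr) -(leqW_mono (leq_mono k_incr)) kp.
move: le_y; rewrite leq_eqVlt => /orP[/eqP // | lt_next].
have /negP[] := no_gap _ ((k_enum _).2 (ex_intro _ n.+1 erefl)).
by rewrite k_incr.
Qed.

Lemma eventually_subn_ge (R : archiRealFieldType) (eps : R) (m H : nat) :
  (0 < eps)%R -> 1 < m ->
  exists N, forall n, N <= n -> ((1 - eps) * (m ^ n)%:R <= (m ^ n - H)%:R)%R.
Proof.
move=> eps_gt0 m_gt1; exists (maxn (Num.Def.archi_bound (H%:R / eps)) H) => n.
rewrite geq_max => /andP[le_B le_H]; have lt_n := ltn_expl n m_gt1.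
rewrite natrB ?(leq_trans le_H (ltnW lt_n)) // mulrBl mul1r lerD2l lerN2.
rewrite mulrC -ler_pdivrMr //; apply/ltW/(lt_le_trans (archi_boundP _)).
  by rewrite divr_ge0 // ltW.
by rewrite ler_nat (leq_trans le_B (ltnW lt_n)).
Qed.

Section DigitBlocks.

Variables (b : nat) (D : {set 'I_b}).
Hypothesis b_gt1 : 1 < b.

Definition Dblock n x := [exists t : n.-tuple 'I_b,
  all (fun d => d \in D) t && (digval b (map val t) == x)].

Definition Dblocks n := [seq x <- iota 0 (b ^ n) | Dblock n x].

Lemma Dblock_lt n x : Dblock n x -> x < b ^ n.
Proof.
by case/existsP => t /andP[_ /eqP <-]; have := digval_ord_lt t; rewrite size_tuple.
Qed.

Lemma mem_Dblocks n x : (x \in Dblocks n) = Dblock n x.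
Proof. by rewrite mem_filter mem_iota add0n andb_idr // => /Dblock_lt ->. Qed.

Lemma Dblocks_sorted n : sorted ltn (Dblocks n).
Proof. by apply: sorted_filter; [exact: ltn_trans | exact: iota_ltn_sorted]. Qed.

Lemma Dblocks_uniq n : uniq (Dblocks n).
Proof. by rewrite filter_uniq ?iota_uniq. Qed.

Lemma size_Dblocks n : #|D| ^ n <= size (Dblocks n).
Proof.
pose w (t : n.-tuple {d | d \in D}) := digval b (map val (map val t)).
have w_inj : injective w.
  move=> t1 t2 /digval_ord_inj; rewrite !size_map !size_tuple => /(_ erefl).
  by move/(inj_map val_inj)/val_inj.
rewrite -[#|D|]card_sig -card_tuple cardE -(size_map w).
apply: uniq_leq_size; first by rewrite map_inj_uniq ?enum_uniq.
move=> _ /mapP[t _ ->]; rewrite mem_Dblocks; apply/existsP.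
exists (map_tuple val t); rewrite eqxx andbT.
by apply/allP => _ /mapP[d _ ->]; exact: valP.
Qed.

Lemma inC_Dblock n x : 0 < n -> Dblock n x -> inC D x.
Proof.
by move=> n_gt0 /existsP[t /andP[tD /eqP <-]]; exists t; rewrite size_tuple.
Qed.

Lemma inC_shift n a x : Dblock n x -> inC D a -> inC D (b ^ n * a + x).
Proof.
case/existsP => t /andP[tD /eqP <-] [s [s_gt0 sD ->]]; exists (t ++ s); split.
- by rewrite size_cat addn_gt0 s_gt0 orbT.
- by rewrite all_cat tD sD.
- by rewrite map_cat digval_cat size_map size_tuple addnC.
Qed.

Lemma Dblock_mod n z : inC D z -> b ^ n <= z -> Dblock n (z %% b ^ n).
Proof.
case=> s [_ sD ->] z_ge; have : b ^ n < b ^ size s.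
  exact: leq_ltn_trans z_ge (digval_ord_lt s).
rewrite ltn_exp2l // => /ltnW n_le.
move: sD; rewrite -[s](cat_take_drop n) all_cat map_cat digval_cat size_map.
rewrite size_takel // => /andP[tD _]; set t := take n s.
have t_size : size t == n by rewrite size_takel.
apply/existsP; exists (Tuple t_size); rewrite tD /=.
by rewrite addnC mulnC modnMDl modn_small // -(eqP t_size) digval_ord_lt.
Qed.

Lemma Dblocks_gap n a i z : 0 < a -> i.+1 < size (Dblocks n) -> inC D z ->
  ~~ (b ^ n * a + nth 0 (Dblocks n) i < z < b ^ n * a + nth 0 (Dblocks n) i.+1).
Proof.
move=> a_gt0 i_lt Cz; apply/negP => /andP[lo hi].
have [w z_eq] : exists w, z = b ^ n * a + w.
  by exists (z - b ^ n * a); rewrite subnKC // (leq_trans (leq_addr _ _) (ltnW lo)).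
subst z; rewrite !ltn_add2l in lo hi.
have w_lt : w < b ^ n.
  by apply: ltn_trans hi _; apply: Dblock_lt; rewrite -mem_Dblocks mem_nth.
have z_ge : b ^ n <= b ^ n * a + w by rewrite (leq_trans (leq_pmulr _ a_gt0)) ?leq_addr.
have := Dblock_mod Cz z_ge; rewrite mulnC modnMDl modn_small // -mem_Dblocks => wT.
by have /negP[] := sorted_ltn_gap (Dblocks_sorted n) i_lt wT; rewrite lo hi.
Qed.

Variable k : nat -> nat.
Hypotheses (k_incr : forall i j, i < j -> k i < k j)
  (k_enum : forall x, inC D x <-> exists n, k n = x).

Lemma enum_Dblocks n a m i j : 0 < a -> inC D a -> i + j < size (Dblocks n) ->
  k m = b ^ n * a + nth 0 (Dblocks n) i ->
  k (m + j) = b ^ n * a + nth 0 (Dblocks n) (i + j).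
Proof.
move=> a_gt0 Ca; elim: j => [|j IH] ij_lt km; first by rewrite !addn0.
have ij_lt' : i + j < size (Dblocks n) by rewrite (leq_ltn_trans _ ij_lt) ?leq_add2l.
rewrite addnS in ij_lt; rewrite !addnS; apply: (enum_succ k_incr k_enum).
- by apply: inC_shift Ca; rewrite -mem_Dblocks mem_nth.
- rewrite IH // ltn_add2l.
  exact: (sorted_ltn_nth ltn_trans 0 (Dblocks_sorted n)).
- by move=> z Cz; rewrite IH //; apply: Dblocks_gap.
Qed.

End DigitBlocks.

Theorem mainTheorem2 (R : realType) (b : nat) (D : {set 'I_b}) (k : nat -> nat)
  (hb : 3 <= b) (hD : 2 <= #|D| < b.-1)
  (hk_incr : forall i j, i < j -> k i < k j)
  (hk_enum : forall x, inC D x <-> exists n, k n = x)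
  (eps : R) (heps : (0 < eps)%R) (H : nat) :
  exists N : nat, forall n0 : nat, N <= n0 ->
    exists (G : seq nat) (k'' : nat -> nat -> nat),
      [/\ uniq G,
          (forall x, x \in G -> inC D x /\ x < b ^ n0),
          (forall k' h, k' \in G -> 0 < h <= H ->
             inC D (k'' k' h) /\ k'' k' h < b ^ n0),
          ((1 - eps) * (#|D| ^ n0)%:R <= (size G)%:R)%R &
          (forall k' h m n, k' \in G -> 0 < h <= H -> 1 <= m ->
             k n = b ^ n0 * k m + k' ->
             k (n + h) = b ^ n0 * k m + k'' k' h /\
             sumdig b (k (n + h)) = sumdig b (k m) + sumdig b (k'' k' h))].
Proof.
have b_gt1 : 1 < b by apply: leq_trans hb.
have [N frac_le] := eventually_subn_ge H heps (andP hD).1.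
exists N.+1 => n0 le_n0; set T := Dblocks D n0.
have T_C x : x \in T -> inC D x /\ x < b ^ n0.
  rewrite mem_Dblocks => Tx; split; last exact: Dblock_lt Tx.
  exact: inC_Dblock (leq_trans (ltn0Sn _) le_n0) Tx.
exists (take (size T - H) T), (fun k' h => nth 0 T (index k' T + h)); split.
- exact/take_uniq/Dblocks_uniq.
- by move=> x /mem_take /T_C.
- move=> k' h /index_ltn k'_lt /andP[_ h_le]; apply/T_C/mem_nth; lia.
- rewrite size_takel ?leq_subr //; apply: le_trans (frac_le _ (ltnW le_n0)) _.
  by rewrite ler_nat leq_sub2r // size_Dblocks.
move=> k' h m n k'G /andP[_ h_le] m_ge1 kn; have k'_lt := index_ltn k'G.
have km_gt0 : 0 < k m := leq_ltn_trans (leq0n _) (hk_incr _ _ m_ge1).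
have Ckm : inC D (k m) by apply/hk_enum; exists m.
have kn' : k n = b ^ n0 * k m + nth 0 T (index k' T).
  by rewrite nth_index // (mem_take k'G).
have hlt : index k' T + h < size T by lia.
rewrite (enum_Dblocks b_gt1 hk_incr hk_enum km_gt0 Ckm hlt kn'); split=> //.
by rewrite sumdig_block // (T_C _ (mem_nth 0 hlt)).2.
Qed.
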